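(* Let $P,Q,R_0,R_1$ be integers with $PQ\ne0$, $\Delta:=P^2-4Q\neq0$, $|R_0|+|R_1|>0$, $\gcd(P,Q)=\gcd(R_1,Q)=1$, such that $\alpha/\beta$ is not a root of unity, where $\alpha,\beta$ are the roots of $x^2-Px+Q$. Let $R_{n+2}=PR_{n+1}-QR_n$ ($n\ge0$) and $U_n=(\alpha^n-\beta^n)/(\alpha-\beta)$. Let $n,k$ be positive integers with $n\ge k$ and $n\ge2$, and suppose $R_k,R_{k+1},\dots,R_n$ are all nonzero. If $R_0\ne0$, then \[\frac{R_0^{\,n-k}}{R_kR_{k+1}\cdots R_n}=\sum_{j=k}^{n}\frac{(-1)^{n-j}U_j^{\,n-k}}{Q^{f(j,k,n)}[j-k]_{\boldsymbol U}!\,[n-j]_{\boldsymbol U}!}\cdot\frac1{R_j}.\] If $R_1\ne0$, then \[\frac{R_1^{\,n-k}}{R_kR_{k+1}\cdots R_n}=\sum_{j=k}^{n}\frac{(-1)^{n-j}U_{j-1}^{\,n-k}}{Q^{f(j,k,n)-(n-k)}[j-k]_{\boldsymbol U}!\,[n-j]_{\boldsymbol U}!}\cdot\frac1{R_j}.\]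
   Context: $U_0=0,U_1=1,U_{n+2}=PU_{n+1}-QU_n$; $[j]_{\boldsymbol U}!:=U_1\cdots U_j$ with $[0]_{\boldsymbol U}!=1$. For $k\le j\le n$, $f(j,k,n):=\sum_{k\le i\le n,\ i\ne j}\min(i,j)$. *)

From HB Require Import structures.
From mathcomp Require Import all_boot all_order all_algebra all_field.
Set Implicit Arguments. Unset Strict Implicit. Unset Printing Implicit Defensive.
Import Order.TTheory GRing.Theory Num.Theory.
Local Open Scope ring_scope.

Fixpoint lucas_pair (P Q a b : int) (n : nat) : int * int :=
  match n with
  | 0%N => (a, b)
  | m.+1 => let: (x, y) := lucas_pair P Q a b m in (y, P * y - Q * x)
  end.

Definition lucas (P Q a b : int) (n : nat) : int := (lucas_pair P Q a b n).1.

Definition lucasU (P Q : int) (n : nat) : int := lucas P Q 0 1 n.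

Definition ufact (P Q : int) (j : nat) : int :=
  \prod_(1 <= i < j.+1) lucasU P Q i.

Definition fjkn (j k n : nat) : nat :=
  (\sum_(k <= i < n.+1 | i != j) minn i j)%N.

(* Since R_i = U_i R_1 - Q U_{i-1} R_0, every R_i is the determinant
   det2 w v_i of w = (R_1, R_0) against v_i = (Q U_{i-1}, U_i), while
   R_0 = det2 w (-1, 0) and R_1 = det2 w (0, 1).  Both identities are thus
   instances of the partial-fraction decomposition of l(w)^(n-k) / prod_i L_i(w)
   for linear forms l, L_k, ..., L_n on a plane, which holds as soon as the
   L_i are pairwise independent.  By d'Ocagne's identity
   det2 v_j v_i = +- Q^(min i j) U_|i-j|, so independence follows from
   Q <> 0 and U_m <> 0 (as alpha/beta is not a root of unity), and the product
   of these determinants is the denominator (-1)^(n-j) Q^f(j,k,n) [j-k]! [n-j]!. *)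

From HB Require Import structures.
From mathcomp Require Import all_boot all_order all_algebra all_field.
From mathcomp Require Import zify ring.
Set Implicit Arguments. Unset Strict Implicit. Unset Printing Implicit Defensive.
Import Order.TTheory GRing.Theory Num.Theory.
Local Open Scope ring_scope.

Lemma nat_ind2 (A : nat -> Prop) :
  A 0%N -> A 1%N -> (forall m, A m -> A m.+1 -> A m.+2) -> forall m, A m.
Proof.
move=> A0 A1 AS m; suff [] : A m /\ A m.+1 by [].
by elim: m => [|m [Am Am1]]; split=> //; apply: AS.
Qed.

Lemma big_nat_neq (R : Type) (idx : R) (op : Monoid.law idx) (F : nat -> R)
    (k j n : nat) :
  (k <= j <= n)%N ->
  \big[op/idx]_(k <= i < n.+1 | i != j) F i
  = op (\big[op/idx]_(k <= i < j) F i) (\big[op/idx]_(j.+1 <= i < n.+1) F i).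
Proof.
case/andP=> kj jn; rewrite (big_cat_nat kj (leqW jn)) /=.
rewrite [X in op _ X]big_ltn_cond ?ltnS //= eqxx.
congr (op _ _); apply: congr_big_nat => // i /andP[ki ij].
  by rewrite ltn_eqF.
by rewrite gtn_eqF.
Qed.

Definition det2 (R : pzRingType) (u v : R * R) : R := u.1 * v.2 - u.2 * v.1.

Lemma det2C (R : comPzRingType) (u v : R * R) : det2 u v = - det2 v u.
Proof. by rewrite /det2 opprB [u.1 * _]mulrC [u.2 * _]mulrC. Qed.

Section HomogeneousPartialFractions.
Variables (F : fieldType) (u : F * F) (v : nat -> F * F).

Lemma det2_partial_fraction_step (w x y : F * F) (p : F) (d : nat) :
  det2 w x != 0 -> det2 w y != 0 -> det2 x y != 0 -> p != 0 ->
  det2 x u ^+ d / (det2 w x * p) * (det2 w u / det2 w y)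
  = det2 x u ^+ d.+1 / (det2 w x * (p * det2 x y))
    + det2 y u / det2 w y * (det2 x u ^+ d / (det2 y x * p)).
Proof.
rewrite [det2 y x]det2C exprS /det2 => wx wy xy p0.
by field; rewrite oppr_eq0 wx wy xy p0.
Qed.

Lemma det2_partial_fractions (w : F * F) (k n : nat) :
  (k <= n)%N ->
  (forall i j, (k <= i <= n)%N -> (k <= j <= n)%N -> i != j ->
     det2 (v i) (v j) != 0) ->
  (forall i, (k <= i <= n)%N -> det2 w (v i) != 0) ->
  det2 w u ^+ (n - k) / \prod_(k <= i < n.+1) det2 w (v i)
  = \sum_(k <= j < n.+1) det2 (v j) u ^+ (n - k)
      / (det2 w (v j) * \prod_(k <= i < n.+1 | i != j) det2 (v j) (v i)).
Proof.
(* The new factor 1/det2 w v_(n+1) splits each term by the two-term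
   decomposition of the previous lemma; the resulting multiples of
   1/det2 w v_(n+1) recombine by the induction hypothesis at w := v_(n+1). *)
move=> /subnKC <-; rewrite addKn; elim: (n - k)%N w => [|d IH] w.
  rewrite addn0 => _ _; rewrite !big_nat1 big_nat_neq ?leqnn // !big_geq //.
  by rewrite /= !expr0 !mulr1.
rewrite addnS; clear n; set n := (k + d)%N => vv_neq0 wv_neq0.
have sub i : (k <= i <= n)%N -> (k <= i <= n.+1)%N by case/andP=> -> /leqW.
have vv_neq0_le i j hi hj := vv_neq0 i j (sub i hi) (sub j hj).
have kn : (k <= n.+1)%N by rewrite leqW ?leq_addr.
have n1_range : (k <= n.+1 <= n.+1)%N by rewrite kn leqnn.
have prod_neq0 j : (k <= j <= n)%N -> \prod_(k <= i < n.+1 | i != j) det2 (v j) (v i) != 0.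
  move=> hj; rewrite prodf_seq_neq0; apply/allP => i; rewrite mem_index_iota.
  by move=> hi; apply/implyP; rewrite eq_sym; apply: vv_neq0_le.
rewrite [RHS]big_nat_recr //= [in LHS]big_nat_recr //= exprSr invfM mulrACA.
rewrite IH -/n; last 2 first.
- by move=> i j hi hj; apply: vv_neq0_le.
- by move=> i hi; apply: wv_neq0; apply: sub.
rewrite big_nat_neq // (big_geq (leqnn n.+2)) /= mulr1.
under [in RHS]eq_big_nat => j /andP[_ jn].
  rewrite big_mkcond big_nat_recr //= -big_mkcond /= ifT ?gtn_eqF //.
  over.
rewrite mulr_suml.
under [in LHS]eq_big_nat => j /andP[kj jn].
  have hj : (k <= j <= n)%N by rewrite kj.
  rewrite det2_partial_fraction_step; first over.
  - exact: wv_neq0 (sub _ hj).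
  - exact: wv_neq0 _ n1_range.
  - by apply: vv_neq0 (sub _ hj) n1_range _; rewrite ltn_eqF.
  - exact: prod_neq0 hj.
rewrite big_split /= -mulr_sumr -IH -/n; last 2 first.
- by move=> i j hi hj; apply: vv_neq0_le.
- move=> i /[dup] hi /andP[_ ilen].
  by apply: vv_neq0 n1_range (sub _ hi) _; rewrite gtn_eqF.
by rewrite exprS invfM mulrACA.
Qed.

End HomogeneousPartialFractions.

Lemma exists_roots_sum_mul (C : numClosedFieldType) (p q : C) :
  exists a b : C, a + b = p /\ a * b = q.
Proof.
pose s := sqrtC (p ^+ 2 - 4 * q).
have two_neq0 : (2 : C) != 0 by rewrite pnatr_eq0.
exists ((p + s) / 2), ((p - s) / 2); split; first by field.
have -> : (p + s) / 2 * ((p - s) / 2) = (p ^+ 2 - s ^+ 2) / 4 by field.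
by rewrite sqrtCK; field.
Qed.

Definition intr2 {R : pzRingType} (u : int * int) : R * R := (u.1%:~R, u.2%:~R).

Lemma det2_intr2 (R : pzRingType) (u v : int * int) :
  det2 (intr2 u) (intr2 v) = (det2 u v)%:~R :> R.
Proof. by rewrite /det2 /= intrB !intrM. Qed.

Section LucasSequences.
Variables P Q : int.
Local Notation U := (lucasU P Q).

Lemma lucasSS a b m :
  lucas P Q a b m.+2 = P * lucas P Q a b m.+1 - Q * lucas P Q a b m.
Proof. by rewrite /lucas /=; case: lucas_pair. Qed.

Lemma lucasUSS m : U m.+2 = P * U m.+1 - Q * U m.
Proof. exact: lucasSS. Qed.

Lemma lucasS_lucasU a b m : lucas P Q a b m.+1 = b * U m.+1 - a * (Q * U m).
Proof.
elim/nat_ind2: m => [||m IHm IHm1].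
- by rewrite /lucasU /lucas /= mulr1 mulr0 mulr0 subr0.
- by rewrite lucasSS lucasUSS /lucasU /lucas /=; ring.
by rewrite lucasSS IHm IHm1 !lucasUSS; ring.
Qed.

Lemma lucasU_dOcagne t d :
  U (t + d) * U t.+1 - U (t + d).+1 * U t = Q ^+ t * U d.
Proof.
elim: t => [|t IHt]; first by rewrite /lucasU /lucas /= mulr1 mulr0 subr0 mul1r.
by rewrite addSn !lucasUSS exprS -mulrA -IHt; ring.
Qed.

Lemma lucasU_binet (R : comPzRingType) (a b : R) :
  a + b = P%:~R -> a * b = Q%:~R ->
  forall m, (U m)%:~R * (a - b) = a ^+ m - b ^+ m.
Proof.
move=> sum_ab mul_ab; elim/nat_ind2 => [||m IHm IHm1].
- by rewrite mul0r subrr.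
- by rewrite mul1r !expr1.
rewrite lucasUSS intrB !intrM -sum_ab -mul_ab mulrBl -!mulrA.
by rewrite IHm IHm1 !exprS; ring.
Qed.

Lemma lucasU_neq0 :
  Q != 0 ->
  (forall a b : algC, a + b = P%:~R -> a * b = Q%:~R ->
     forall m : nat, (0 < m)%N -> (a / b) ^+ m != 1) ->
  forall m, (0 < m)%N -> U m != 0.
Proof.
move=> Q_neq0 not_root m m_gt0.
have [a [b [sum_ab mul_ab]]] := exists_roots_sum_mul (P%:~R : algC) Q%:~R.
have b_neq0 : b != 0.
  apply: contra_neq Q_neq0 => b0; apply/eqP.
  by rewrite -(intr_eq0 algC) -mul_ab b0 mulr0.
apply: contra (not_root a b sum_ab mul_ab m m_gt0) => /eqP Um0.
have abm : a ^+ m = b ^+ m.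
  by apply/eqP; rewrite -subr_eq0 -(lucasU_binet sum_ab mul_ab) Um0 mul0r.
by rewrite expr_div_n abm divff // expf_neq0.
Qed.

Lemma ufact_rev k j : (k <= j)%N -> \prod_(k <= i < j) U (j - i) = ufact P Q (j - k).
Proof.
move=> kj; rewrite /ufact big_add1 /=; move: (j - k)%N (subnKC kj) => m <-.
rewrite -{1}[k]add0n big_addn addKn big_nat_rev /=.
by apply: eq_big_nat => i /andP[_ im]; congr U; lia.
Qed.

Lemma ufact_shift j n : (j <= n)%N -> \prod_(j.+1 <= i < n.+1) U (i - j) = ufact P Q (n - j).
Proof.
move=> jn; rewrite /ufact -[j.+1]add1n big_addn subSn //.
by apply: eq_big_nat => i _; rewrite addnK.
Qed.

Definition lucas_vec (i : nat) : int * int := (Q * U i.-1, U i).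

Lemma det2_lucas_vec R0 R1 i :
  (0 < i)%N -> det2 (R1, R0) (lucas_vec i) = lucas P Q R0 R1 i.
Proof. by case: i => // i _; rewrite lucasS_lucasU. Qed.

Lemma det2_lucas_vec_le i j :
  (0 < i <= j)%N -> det2 (lucas_vec j) (lucas_vec i) = Q ^+ i * U (j - i).
Proof.
case: i => // t /andP[_ tj]; move: (j - t.+1)%N (subnKC tj) => d <-.
by rewrite /det2 /= addSn /= exprS -mulrA -lucasU_dOcagne; ring.
Qed.

Lemma det2_lucas_vec_neq0 i j :
  Q != 0 -> (forall m, (0 < m)%N -> U m != 0) ->
  (0 < i)%N -> (0 < j)%N -> i != j -> det2 (lucas_vec i) (lucas_vec j) != 0.
Proof.
move=> Q_neq0 U_neq0 i_gt0 j_gt0.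
have lt_neq0 a b : (0 < b)%N -> (b < a)%N -> det2 (lucas_vec a) (lucas_vec b) != 0.
  move=> b_gt0 ba; rewrite det2_lucas_vec_le ?b_gt0 ?(ltnW ba) //.
  by rewrite mulf_neq0 ?expf_neq0 ?U_neq0 ?subn_gt0.
rewrite neq_ltn => /orP[ij|ji]; last exact: lt_neq0.
by rewrite det2C oppr_eq0 lt_neq0.
Qed.

Lemma prod_det2_lucas_vec j k n :
  (0 < k)%N -> (k <= j <= n)%N ->
  \prod_(k <= i < n.+1 | i != j) det2 (lucas_vec j) (lucas_vec i)
  = (-1) ^+ (n - j) * Q ^+ fjkn j k n * ufact P Q (j - k) * ufact P Q (n - j).
Proof.
move=> k_gt0 /[dup] kjn /andP[kj jn].
have lower : \prod_(k <= i < j) det2 (lucas_vec j) (lucas_vec i)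
    = Q ^+ (\sum_(k <= i < j) minn i j) * ufact P Q (j - k).
  rewrite -ufact_rev // -prodrXr -big_split; apply: eq_big_nat => i /andP[ki ij].
  by rewrite det2_lucas_vec_le ?(leq_trans k_gt0 ki) ?(ltnW ij) // (minn_idPl (ltnW ij)).
have upper : \prod_(j.+1 <= i < n.+1) det2 (lucas_vec j) (lucas_vec i)
    = (-1) ^+ (n - j) * Q ^+ (\sum_(j.+1 <= i < n.+1) minn i j) * ufact P Q (n - j).
  rewrite -ufact_shift // -prodrXr -[(n - j)%N]subSS -prodr_const_nat -!big_split.
  apply: eq_big_nat => i /andP[ji _]; rewrite det2C det2_lucas_vec_le; last first.
    by rewrite (leq_trans k_gt0 kj) ltnW.
  by rewrite /= (minn_idPr (ltnW ji)) mulN1r mulNr.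
by rewrite /fjkn !(big_nat_neq _ _ kjn) /= lower upper exprD; ring.
Qed.

Lemma lucas_partial_fractions (R0 R1 : int) (z : int * int) (k n : nat) :
  Q != 0 -> (forall m, (0 < m)%N -> U m != 0) -> (0 < k <= n)%N ->
  (forall i, (k <= i <= n)%N -> lucas P Q R0 R1 i != 0) ->
  ((det2 (R1, R0) z)%:~R : rat) ^+ (n - k)
    / \prod_(k <= i < n.+1) (lucas P Q R0 R1 i)%:~R
  = \sum_(k <= j < n.+1)
      (-1) ^+ (n - j) * (det2 (lucas_vec j) z)%:~R ^+ (n - k)
      / ((Q%:~R : rat) ^+ fjkn j k n * (ufact P Q (j - k))%:~R
         * (ufact P Q (n - j))%:~R)
      * ((lucas P Q R0 R1 j)%:~R)^-1.
Proof.
move=> Q_neq0 U_neq0 /andP[k_gt0 kn] R_neq0.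
pose v i : rat * rat := intr2 (lucas_vec i).
have vR i : (k <= i < n.+1)%N -> det2 (intr2 (R1, R0)) (v i) = (lucas P Q R0 R1 i)%:~R.
  by case/andP=> ki _; rewrite det2_intr2 det2_lucas_vec // (leq_trans k_gt0 ki).
rewrite -det2_intr2 -(eq_big_nat _ _ vR) (det2_partial_fractions (intr2 z) (v:=v) kn); last 2 first.
- move=> i j /andP[ki _] /andP[kj _] ij; rewrite det2_intr2 intr_eq0.
  by rewrite det2_lucas_vec_neq0 // ?(leq_trans k_gt0 ki) ?(leq_trans k_gt0 kj).
- by move=> i hi; rewrite vR // intr_eq0 R_neq0.
apply: eq_big_nat => j hj; rewrite vR // det2_intr2.
rewrite (eq_bigr _ (fun i _ => det2_intr2 _ _ _)) -rmorph_prod prod_det2_lucas_vec //.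
by rewrite !rmorphM rmorphXn rmorph_sign !invfM invr_sign; ring.
Qed.

End LucasSequences.

Theorem lemma5 (P Q R0 R1 : int) (n k : nat) :
  P * Q != 0 ->
  P ^+ 2 - 4 * Q != 0 ->
  0 < `|R0| + `|R1| ->
  gcdz P Q = 1%N ->
  gcdz R1 Q = 1%N ->
  (forall a b : algC, a + b = P%:~R -> a * b = Q%:~R ->
     forall m : nat, (0 < m)%N -> (a / b) ^+ m != 1) ->
  (0 < k)%N -> (k <= n)%N -> (2 <= n)%N ->
  (forall i : nat, (k <= i <= n)%N -> lucas P Q R0 R1 i != 0) ->
  (R0 != 0 ->
     (R0%:~R : rat) ^+ (n - k) / \prod_(k <= i < n.+1) (lucas P Q R0 R1 i)%:~R
     = \sum_(k <= j < n.+1)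
         (-1) ^+ (n - j) * (lucasU P Q j)%:~R ^+ (n - k)
         / ((Q%:~R : rat) ^+ (fjkn j k n) * (ufact P Q (j - k))%:~R
            * (ufact P Q (n - j))%:~R)
         * ((lucas P Q R0 R1 j)%:~R)^-1) /\
  (R1 != 0 ->
     (R1%:~R : rat) ^+ (n - k) / \prod_(k <= i < n.+1) (lucas P Q R0 R1 i)%:~R
     = \sum_(k <= j < n.+1)
         (-1) ^+ (n - j) * (lucasU P Q j.-1)%:~R ^+ (n - k)
         / ((Q%:~R : rat) ^ ((fjkn j k n)%:Z - (n - k)%:Z)
            * (ufact P Q (j - k))%:~R * (ufact P Q (n - j))%:~R)
         * ((lucas P Q R0 R1 j)%:~R)^-1).
Proof.
move=> PQ_neq0 _ _ _ _ not_root k_gt0 kn _ R_neq0.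
have Q_neq0 : Q != 0 by move: PQ_neq0; rewrite mulf_eq0 negb_or => /andP[].
have U_neq0 := lucasU_neq0 Q_neq0 not_root.
have k_range : (0 < k <= n)%N by rewrite k_gt0.
split=> _.
- have -> : (R0%:~R : rat) = (det2 (R1, R0) (-1, 0))%:~R.
    by rewrite /det2 /= mulr0 mulrN1 sub0r opprK.
  rewrite lucas_partial_fractions //; apply: eq_big_nat => j _.
  by rewrite /det2 /= mulr0 mulrN1 sub0r opprK.
- have -> : (R1%:~R : rat) = (det2 (R1, R0) (0, 1))%:~R.
    by rewrite /det2 /= mulr1 mulr0 subr0.
  rewrite lucas_partial_fractions //; apply: eq_big_nat => j _.
  rewrite /det2 /= mulr1 mulr0 subr0 intrM exprMn expfzDr ?intr_eq0 //.
  by rewrite -exprnP -exprnN !invfM invrK; ring.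
Qed.
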